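(* Let $G$ be a nonabelian finite simple group and $S$ a component of $\hat Y(G)$ whose type (genus and cell structure) occurs exactly $k$ times among the components of $\hat Y(G)$, where $k!<|G|$. Then the subquotient $\bar Q_S$ associated to $S$ (for the conjugation action of $G$) equals $G$. If moreover $S$ is non-equivar, then $G=\bar Q_S$ is the group of orientation preserving automorphisms of the cell structure of $S$.
   Context: Construction: for a finite nonabelian group $G$, $X(G)$ is the 2-dimensional simplicial complex with vertices $(g,1)$ (''type 1'') and $(g,2)$ (''type 2''), $g\in G$, and oriented triangles $[(a,1),(b,1),(ab,2)]$ for $ab\ne ba$; $\hat Y(G)$ is its canonical resolution of singularities (vertices whose links are several circles are split, one vertex per circle), a disjoint union of closed connected oriented triangulated surfaces called components. Each component has a closed 2-cell structure: 0-cells the type 1 vertices, 1-cells the edges joining type 1 vertices, 2-cells the unions of triangles around a type 2 vertex. For a component $S$ containing the edge $[(x,1),(y,1)]$, $G$ acts by conjugation $(g,i)\mapsto(hgh^{-1},i)$; $G_S$ is the stabilizer of $S$, and $\bar Q_S=G_S/(C(x)\cap C(y))$ ($C(\cdot)$ = centralizer), which acts faithfully on $S$. $S$ is non-equivar if the valencies (numbers of incident 2-cells) $\lambda_1$ of $(x,1)$ and $\lambda_2$ of $(y,1)$ differ, i.e. its Schläfli symbol is $\{n,\lambda_1\text{-}\lambda_2\}$ with $\lambda_1\ne\lambda_2$. *)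

From HB Require Import structures.
From mathcomp Require Import all_boot all_order all_fingroup.
Set Implicit Arguments. Unset Strict Implicit. Unset Printing Implicit Defensive.
Local Open Scope group_scope.

Section XG.
Variable gT : finGroupType.

(* The pair t = (a,b) with ab <> ba encodes the oriented triangle
   [(a,1),(b,1),(ab,2)] of X(G) (corner 1 = (a,1), corner 2 = (b,1),
   corner 3 = (ab,2)).  Note x ^ y = y^-1 * x * y in MathComp. *)
Definition is_tri (t : gT * gT) : bool := t.1 * t.2 != t.2 * t.1.

(* The other triangle through edge {corner1,corner2} of t. *)
Definition s12 (t : gT * gT) : gT * gT := (t.2, t.1).
(* The other triangle through edge {corner2,corner3} of t: (b, b^-1 a b);
   that edge is its edge {corner3,corner1}. *)
Definition s23 (t : gT * gT) : gT * gT := (t.2, t.1 ^ t.2).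
(* Inverse of s23: the other triangle through edge {corner3,corner1}: (a b a^-1, a). *)
Definition s31 (t : gT * gT) : gT * gT := (t.2 ^ t.1^-1, t.1).

(* Since X(G) is a
   pseudo-surface (every edge lies in exactly two triangles), the components
   of the resolution \hat Y(G) are the classes of triangles for the
   transitive closure of edge-adjacency. *)
Definition tri_adj : rel (gT * gT) := fun t u =>
  [&& is_tri t, is_tri u & [|| u == s12 t, u == s23 t | t == s23 u]].

Definition comp_of (t : gT * gT) : {set gT * gT} := [set u | connect tri_adj t u].

Definition is_component (S : {set gT * gT}) : bool :=
  [exists t, is_tri t && (S == comp_of t)].

(* Conjugation action of g on triangles (the paper's h g h^-1 with h = g^-1). *)
Definition conjT (g : gT) (t : gT * gT) : gT * gT := (t.1 ^ g, t.2 ^ g).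

Definition comp_stab (S : {set gT * gT}) : {set gT} := [set g | conjT g @: S == S].

(* Orientation-preserving isomorphism of cell structures S -> S' (on triangles,
   i.e. on the flags (2-cell, boundary edge) of the cell structure). *)
Definition ori_iso (S S' : {set gT * gT}) (f : {perm gT * gT}) : bool :=
  (f @: S == S') &&
  [forall t in S, (f (s12 t) == s12 (f t)) && (f (s23 t) == s23 (f t))].

(* Orientation-reversing isomorphism: corners 1 and 2 are exchanged. *)
Definition rev_iso (S S' : {set gT * gT}) (f : {perm gT * gT}) : bool :=
  (f @: S == S') &&
  [forall t in S, (f (s12 t) == s12 (f t)) && (f (s23 t) == s31 (f t))].

Definition same_type (S S' : {set gT * gT}) : bool :=
  [exists f, ori_iso S S' f || rev_iso S S' f].

(* Valency (number of incident 2-cells) of the resolved vertex at corner 1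
   of triangle t: the rotation around that vertex is s23 \o s12, each step
   passing one 2-cell. *)
Definition valency (t : gT * gT) : nat := fingraph.order (fun u => s23 (s12 u)) t.

(* Non-equivar: the valencies of the two endpoints of a type-1 edge differ. *)
Definition non_equivar (S : {set gT * gT}) : bool :=
  [exists t in S, valency t != valency (s12 t)].

End XG.

From Pilot Require Import Defs.
From HB Require Import structures.
From mathcomp Require Import all_boot all_order all_fingroup all_solvable.
(* Re-import Defs: burnside_app (in all_solvable) also defines s12, s23, s31. *)
Import Defs.
Set Implicit Arguments. Unset Strict Implicit. Unset Printing Implicit Defensive.
Local Open Scope group_scope.

(* G acts by conjugation on triangles, commuting with the edge flips s12,
   s23, s31; so it permutes the k components of the type of S, and as
   k! < |G| the simple group G fixes each of them.  The flips s23 and s31 are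
   s12 followed by a conjugation, so every triangle of S = comp_of t0 is
   conjugate to t0 or to s12 t0, and C(x) :&: C(y) is the same group for all
   triangles (x, y) of S.  Since G stabilises S, this group is normal, hence
   trivial.  If f is an orientation-preserving automorphism of S, then f t0 is
   conjugate to t0: were it conjugate to s12 t0, the two ends of every edge
   would have equal valencies.  An automorphism is determined by the image of
   one triangle, so f is a conjugation. *)

Lemma connect_ind (T : finType) (e : rel T) x (P : T -> Prop) :
    P x -> (forall y z, connect e x y -> e y z -> P y -> P z) ->
  forall y, connect e x y -> P y.
Proof.
move=> Px step; suff Ppath p y : connect e x y -> P y -> path e y p -> P (last y p).
  by move=> _ /connectP[p pth ->]; apply: Ppath (connect0 e x) Px pth.
elim: p y => [|z p IHp] y //= xy Py /andP[yz pz].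
by apply: IHp pz; [apply: connect_trans xy (connect1 yz) | apply: step yz Py].
Qed.

Lemma order_intertwined (T : finType) (r h : T -> T) (A : {pred T}) x :
    injective h -> {homo r : y / y \in A} -> {in A, forall y, h (r y) = r (h y)} ->
  x \in A -> fingraph.order r (h x) = fingraph.order r x.
Proof.
move=> inj_h rA hr Ax.
have iter_h n : iter n r x \in A /\ h (iter n r x) = iter n r (h x).
  by elim: n => [|n [An IHn]] //=; rewrite rA // hr // IHn.
rewrite /fingraph.order -(card_imset (mem (fconnect r x)) inj_h).
apply: eq_card => y; apply/idP/imsetP => [/iter_findex <- | [z /iter_findex <- ->]].
  exists (iter (findex r (h x) y) r x); first exact: fconnect_iter.
  by case: (iter_h (findex r (h x) y)).
by case: (iter_h (findex r x z)) => _ ->; apply: fconnect_iter.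
Qed.

Lemma simple_acts_trivially (aT : finGroupType) (rT : finType)
    (to : {action aT &-> rT}) (C : {set rT}) :
    simple [set: aT] -> [acts [set: aT], on C | to] -> #|C|`! < #|[set: aT]| ->
  [set: aT] \subset 'C(C | to).
Proof.
move=> simG nC ltCG; pose nCT : actby_cond [set: aT]%G C to := nC.
have /simpleP[_ /(_ _ (ker_normal (actperm_morphism <[nCT]>)))] := simG.
case=> [ker1 | kerT]; last first.
  apply/subsetP=> g _.
  have : g \in 'ker (actperm_morphism <[nCT]>) by rewrite kerT inE.
  by rewrite ker_actperm astab_actby setIT inE => /andP[].
have permC g : actperm <[nCT]> g \in perm_on C.
  apply/subsetP=> x; rewrite inE actpermE /= /actby.
  by case: (x \in C); rewrite ?eqxx.
suff : #|[set: aT]| <= #|C|`! by rewrite leqNgt ltCG.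
rewrite -card_perm -(card_injm (f := actperm_morphism <[nCT]>)) ?subsetT //.
  apply: subset_leq_card; apply/subsetP => _ /morphimP[g _ _ ->].
  exact: permC.
by apply/trivgP; rewrite ker1.
Qed.

Section ConjugationOnTriangles.
Variable gT : finGroupType.
Implicit Types (t u : gT * gT) (g h : gT) (X : {set gT * gT}).

Lemma conjT1 t : conjT 1 t = t.
Proof. by case: t => a b; rewrite /conjT !conjg1. Qed.

Lemma conjTM t g h : conjT (g * h) t = conjT h (conjT g t).
Proof. by rewrite /conjT !conjgM. Qed.

Definition conjT_action : {action gT &-> gT * gT} :=
  TotalAction (to := fun t g => conjT g t) conjT1 conjTM.

Lemma conjT_inj g : injective (conjT g).
Proof. by move=> [a b] [c d] [/conjg_inj -> /conjg_inj ->]. Qed.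

Lemma conjTK g : cancel (conjT g) (conjT g^-1).
Proof. by move=> t; rewrite -conjTM mulgV conjT1. Qed.

Lemma conjTKV g : cancel (conjT g^-1) (conjT g).
Proof. by move=> t; rewrite -conjTM mulVg conjT1. Qed.

Lemma s12_conj g t : s12 (conjT g t) = conjT g (s12 t).
Proof. by []. Qed.

Lemma s23_conj g t : s23 (conjT g t) = conjT g (s23 t).
Proof. by case: t => a b; rewrite /s23 /conjT /= [in RHS]conjJg. Qed.

Lemma s31_conj g t : s31 (conjT g t) = conjT g (s31 t).
Proof. by case: t => a b; rewrite /s31 /conjT /= [in RHS]conjJg conjVg. Qed.

Lemma s12K t : s12 (s12 t) = t.
Proof. by case: t. Qed.

Lemma s23K t : s31 (s23 t) = t.
Proof. by case: t => a b; rewrite /s31 /s23 /= conjgK. Qed.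

Lemma s31K t : s23 (s31 t) = t.
Proof. by case: t => a b; rewrite /s31 /s23 /= conjgKV. Qed.

Lemma s23_inj : injective (@s23 gT).
Proof. exact: can_inj s23K. Qed.

Lemma s23E t : s23 t = conjT t.2 (s12 t).
Proof. by case: t => a b; rewrite /conjT /= [b ^ b]conjgE mulKg. Qed.

Lemma s31E t : s31 t = conjT t.1^-1 (s12 t).
Proof. by case: t => a b; rewrite /conjT /= [a ^ a^-1]conjgE invgK mulgV mulg1. Qed.

Lemma is_tri_s12 t : is_tri (s12 t) = is_tri t.
Proof. by rewrite /is_tri eq_sym. Qed.

Lemma is_tri_conj g t : is_tri (conjT g t) = is_tri t.
Proof. by rewrite /is_tri /= -!conjMg (inj_eq (@conjg_inj _ g)). Qed.

Lemma tri_adj_conj g t u : tri_adj (conjT g t) (conjT g u) = tri_adj t u.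
Proof.
by rewrite /tri_adj !is_tri_conj s12_conj !s23_conj !(inj_eq (@conjT_inj g)).
Qed.

Lemma comp_of_conj g t : conjT g @: comp_of t = comp_of (conjT g t).
Proof.
have conj_connect h t1 u1 : connect (@tri_adj gT) t1 u1 ->
    connect (@tri_adj gT) (conjT h t1) (conjT h u1).
  case/connectP=> p pth ->; apply/connectP; exists (map (conjT h) p).
    by elim: p t1 pth => [|v p IHp] w //= /andP[wv pv]; rewrite tri_adj_conj wv IHp.
  by rewrite last_map.
apply/setP=> u; rewrite inE; apply/imsetP/idP => [[v] | tu].
  by rewrite inE => /(conj_connect g) ? ->.
exists (conjT g^-1 u); last by rewrite conjTKV.
by rewrite inE -(conjTK g t); apply: conj_connect.
Qed.

Lemma component_conj g X : is_component X -> is_component (conjT g @: X).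
Proof.
case/existsP=> t /andP[tri_t /eqP ->]; apply/existsP; exists (conjT g t).
by rewrite is_tri_conj tri_t comp_of_conj eqxx.
Qed.

Lemma same_type_refl X : same_type X X.
Proof.
apply/existsP; exists 1; apply/orP; left.
rewrite /ori_iso (eq_imset _ (@perm1 _)) imset_id eqxx /=.
by apply/forall_inP=> t _; rewrite !perm1 !eqxx.
Qed.

Lemma same_type_conj g X Y : same_type X Y -> same_type X (conjT g @: Y).
Proof.
case/existsP=> f Hf; apply/existsP; exists (f * actperm conjT_action g).
rewrite /ori_iso /rev_iso.
have -> : (f * actperm conjT_action g) @: X = conjT g @: (f @: X).
  by rewrite -imset_comp; apply: eq_imset => t /=; rewrite permM actpermE.
case/orP: Hf => /andP[/eqP -> /forall_inP Hf]; rewrite eqxx /=;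
  apply/orP; [left | right]; apply/forall_inP=> t /Hf /andP[/eqP f12 /eqP f23];
  by rewrite !permM !actpermE /= f12 f23 ?s23_conj ?s31_conj !eqxx.
Qed.

Lemma tri_adj_cases t u :
  tri_adj t u -> [/\ is_tri t, is_tri u & [\/ u = s12 t, u = s23 t | u = s31 t]].
Proof.
case/and3P=> tri_t tri_u adj; split=> //; case/or3P: adj => /eqP ->.
- by constructor 1.
- by constructor 2.
- by constructor 3; rewrite s23K.
Qed.

Lemma comp_of_refl t : t \in comp_of t.
Proof. by rewrite inE connect0. Qed.

Lemma comp_of_ind t0 (P : gT * gT -> Prop) : P t0 ->
    (forall t u, t \in comp_of t0 -> u \in comp_of t0 -> tri_adj t u -> P t -> P u) ->
  {in comp_of t0, forall u, P u}.
Proof.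
move=> P0 step u; rewrite inE; apply: connect_ind P0 _ u => y z t0y yz.
by apply: (step _ _ _ _ yz); rewrite inE // (connect_trans t0y (connect1 yz)).
Qed.

Lemma comp_of_tri t0 : is_tri t0 -> {subset comp_of t0 <= @is_tri gT}.
Proof. by move=> tri0; apply: comp_of_ind => // t u _ _ /tri_adj_cases[]. Qed.

Lemma comp_of_s12 t0 u : is_tri t0 -> u \in comp_of t0 -> s12 u \in comp_of t0.
Proof.
move=> tri0 uS; have tri_u : is_tri u := comp_of_tri tri0 uS.
move: uS; rewrite !inE => /connect_trans; apply; apply: connect1.
by rewrite /tri_adj tri_u is_tri_s12 tri_u eqxx.
Qed.

Lemma comp_of_s23 t0 u : is_tri t0 -> u \in comp_of t0 -> s23 u \in comp_of t0.
Proof.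
move=> tri0 uS; have tri_u : is_tri u := comp_of_tri tri0 uS.
move: uS; rewrite !inE => /connect_trans; apply; apply: connect1.
by rewrite /tri_adj tri_u s23E is_tri_conj is_tri_s12 tri_u eqxx orbT.
Qed.

(* s23 and s31 are s12 followed by a conjugation. *)
Lemma comp_of_conj_orbits t0 :
  {in comp_of t0, forall u, exists h, u = conjT h t0 \/ u = conjT h (s12 t0)}.
Proof.
apply: comp_of_ind => [|t u _ _ /tri_adj_cases[_ _ adj] [h Ht]].
  by exists 1; left; rewrite conjT1.
have [h' Hh'] : exists h', s12 t = conjT h' t0 \/ s12 t = conjT h' (s12 t0).
  by exists h; case: Ht => ->; [right | left]; rewrite s12_conj ?s12K.
case: adj => ->; first by exists h'.
  by exists (h' * t.2); rewrite s23E !conjTM; case: Hh' => ->; [left | right].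
by exists (h' * t.1^-1); rewrite s31E !conjTM; case: Hh' => ->; [left | right].
Qed.

Definition tri_cent t := 'C[t.1] :&: 'C[t.2].
Canonical tri_cent_group t := Eval hnf in [group of tri_cent t].

Lemma tri_centJ g t : tri_cent (conjT g t) = tri_cent t :^ g.
Proof. by rewrite /tri_cent conjIg !cent1J. Qed.

Lemma tri_cent_s12 t : tri_cent (s12 t) = tri_cent t.
Proof. exact: setIC. Qed.

Lemma tri_cent_s23 t : tri_cent (s23 t) = tri_cent t.
Proof.
case: t => a b; rewrite /tri_cent /= setIC cent1J; apply/setP=> z.
rewrite inE [in RHS]inE mem_conjg; apply: andb_id2r => /cent1P /commuteV zb.
by rewrite conjgE zb mulKg.
Qed.

Lemma tri_cent_comp t0 : {in comp_of t0, forall u, tri_cent u = tri_cent t0}.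
Proof.
apply: comp_of_ind => // t u _ _ /tri_adj_cases[_ _ adj] <-.
by case: adj => ->; rewrite ?tri_cent_s12 ?tri_cent_s23 // -tri_cent_s23 s31K.
Qed.

Lemma valency_conj g t : valency (conjT g t) = valency t.
Proof.
apply: (order_intertwined (A := predT)) => // [|u _]; first exact: conjT_inj.
by rewrite s12_conj s23_conj.
Qed.

Lemma comp_stab_setT S : simple [set: gT] -> is_component S ->
    #|[set S' | is_component S' && same_type S S']|`! < #|[set: gT]| ->
  comp_stab S = [set: gT].
Proof.
set C := [set S' | _]; move=> simG compS ltCG.
have actsC : [acts [set: gT], on C | conjT_action^*].
  apply/subsetP=> g _; rewrite !inE; apply/subsetP=> X; rewrite !inE => /andP[compX tX].
  by apply/andP; split; [apply: component_conj | apply: same_type_conj].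
have /subsetP fixC := simple_acts_trivially simG actsC ltCG.
have SC : S \in C by rewrite inE compS same_type_refl.
apply/setP=> g; rewrite !inE; apply/eqP.
by move/astabP: (fixC g (in_setT g)) => /(_ S SC).
Qed.

Lemma tri_cent_trivial t0 : simple [set: gT] -> is_tri t0 ->
  comp_stab (comp_of t0) = [set: gT] -> tri_cent t0 = 1.
Proof.
move=> simG tri0 stab0.
have normal_cent : tri_cent t0 <| [set: gT].
  rewrite /normal subsetT; apply/normsP=> g _; rewrite -tri_centJ; apply: tri_cent_comp.
  have : g \in comp_stab (comp_of t0) by rewrite stab0 inE.
  by rewrite inE => /eqP <-; apply: imset_f; apply: comp_of_refl.
case/simpleP: simG => _ /(_ _ normal_cent) [/(congr1 val) // | centT].
have : t0.1 \in tri_cent_group t0 by rewrite centT inE.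
by rewrite inE => /andP[_ /cent1P comm0]; move: tri0; rewrite /is_tri comm0 eqxx.
Qed.

Lemma valency_ori_iso t0 S f : is_tri t0 -> ori_iso (comp_of t0) S f ->
  {in comp_of t0, forall t, valency (f t) = valency t}.
Proof.
move=> tri0 /andP[_ /forall_inP f_flips] t tS.
apply: (order_intertwined (A := mem (comp_of t0))) => // [|u uS|u uS].
- exact: perm_inj.
- exact: comp_of_s23 tri0 (comp_of_s12 tri0 uS).
have /andP[/eqP f12 _] := f_flips u uS.
by have /andP[_ /eqP f23] := f_flips _ (comp_of_s12 tri0 uS); rewrite f23 f12.
Qed.

Lemma non_equivar_valency t0 :
  non_equivar (comp_of t0) -> valency (s12 t0) != valency t0.
Proof.
apply: contraL => /eqP v0; apply/negP => /exists_inP[t /comp_of_conj_orbits[h [] ->]].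
  by rewrite s12_conj !valency_conj v0 eqxx.
by rewrite s12_conj s12K !valency_conj v0 eqxx.
Qed.

Lemma ori_iso_eq_conj t0 S f h : ori_iso (comp_of t0) S f ->
  f t0 = conjT h t0 -> {in comp_of t0, forall t, f t = conjT h t}.
Proof.
move=> /andP[_ /forall_inP f_flips] ft0.
apply: comp_of_ind => // t u tS + /tri_adj_cases[_ _ adj] ft.
have /andP[/eqP f12 /eqP f23] := f_flips t tS; case: adj => -> uS.
- by rewrite f12 ft.
- by rewrite f23 ft s23_conj.
apply: s23_inj; rewrite s23_conj s31K -ft.
by have /andP[_ /eqP] := f_flips _ uS; rewrite s31K => <-.
Qed.

Lemma ori_iso_conj t0 f : is_tri t0 -> non_equivar (comp_of t0) ->
    ori_iso (comp_of t0) (comp_of t0) f ->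
  exists h, {in comp_of t0, forall t, f t = conjT h t}.
Proof.
move=> tri0 ne0 isof; have ft0 : f t0 \in comp_of t0.
  by case/andP: isof => /eqP <- _; apply: imset_f; apply: comp_of_refl.
have [h [fh | fh]] := comp_of_conj_orbits ft0.
  by exists h; apply: ori_iso_eq_conj isof fh.
case/negP: (non_equivar_valency ne0).
by rewrite -(valency_conj h) -fh (valency_ori_iso tri0 isof) ?comp_of_refl.
Qed.

Lemma conjT_faithful t g h : tri_cent t = 1 -> conjT g t = conjT h t -> g = h.
Proof.
case: t => a b cent1 [ea eb]; have : g * h^-1 \in tri_cent (a, b).
  by rewrite in_setI; apply/andP; split; apply/cent1P/commute_sym/commgP/conjg_fixP;
    rewrite conjgM ?ea ?eb conjgK.
by rewrite cent1 => /set1gP/eqP; rewrite -eq_mulgV1 => /eqP.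
Qed.

End ConjugationOnTriangles.

Theorem lemma3p6 (gT : finGroupType) (S : {set gT * gT}) (k : nat) :
  simple [set: gT] -> ~~ abelian [set: gT] ->
  is_component S ->
  #|[set S' : {set gT * gT} | is_component S' && same_type S S']| = k ->
  k`! < #|[set: gT]| ->
  (comp_stab S = [set: gT] /\
   (forall x y : gT, (x, y) \in S -> ('C[x] :&: 'C[y] = [1 gT])%g)) /\
  (non_equivar S ->
     (forall f : {perm gT * gT}, ori_iso S S f ->
        exists g : gT, {in S, forall t, f t = conjT g t}) /\
     (forall g h : gT, {in S, forall t, conjT g t = conjT h t} -> g = h)).
Proof.
(* Non-commutativity is implied by S containing a triangle. *)
move=> simG _ compS <- ltCG; have stabS := comp_stab_setT simG compS ltCG.
case/existsP: compS => t0 /andP[tri0 /eqP defS]; subst S.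
have cent0 := tri_cent_trivial simG tri0 stabS.
split; first by split=> // x y /tri_cent_comp; rewrite cent0.
move=> ne0; split=> [f | g h eq_gh]; first exact: ori_iso_conj.
exact: conjT_faithful cent0 (eq_gh t0 (comp_of_refl t0)).
Qed.
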